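(* Under the standing assumptions stated in the context, $\lim_{\beta\to\infty}\mu_\beta(\check{\mathcal S}(0))/\mu_\beta(\mathcal S)=1$, where $\check{\mathcal S}(0)=\{\sigma\in\mathcal S:\mathrm{supp}[\sigma]\cap B_{L_\beta,L_\beta}(0)=\emptyset\}$.
   Context: Kawasaki setting. Fix $U>0$ and $\Delta$ with $U<\Delta<2U$ and $U/(2U-\Delta)\notin\mathbb N$; $\ell_c=\lceil U/(2U-\Delta)\rceil$. $\Lambda_\beta\subset\mathbb Z^2$: square box of odd side length centred at the origin with periodic boundary conditions. $\rho_\beta=e^{-\beta\Delta}$, $n_\beta=\lceil\rho_\beta|\Lambda_\beta|\rceil$. Assume $|\Lambda_\beta|\rho_\beta\to\infty$ and $|\Lambda_\beta|e^{-\beta\Gamma}\to0$, where $\Gamma=-U\,b+\Delta[\ell_c(\ell_c-1)+2]$ and $b$ is the number of nearest-neighbour pairs inside a proto-critical droplet (a set of $\ell_c(\ell_c-1)+1$ sites forming either an $(\ell_c-2)\times(\ell_c-2)$ square with four bars on its sides of total length $3\ell_c-3$, or an $(\ell_c-1)\times(\ell_c-3)$ rectangle with four bars of total length $3\ell_c-2$). $\mathcal X_\beta^{(m)}=\{\sigma\in\{0,1\}^{\Lambda_\beta}:|\mathrm{supp}[\sigma]|=m\}$. $H_\beta(\sigma)=-U\sum_{\{x,y\}}\sigma(x)\sigma(y)$ (unordered nearest-neighbour pairs); canonical Gibbs measure $\mu_\beta=e^{-\beta H_\beta}/Z_\beta^{(n_\beta)}$ on $\mathcal X_\beta^{(n_\beta)}$.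 $L_\beta$ odd with $L_\beta^2=e^{(\Delta-\delta_\beta)\beta}$, $\delta_\beta\to0$, $\beta\delta_\beta\to\infty$; $B_{L,L}(x)$: square box of side $L$ centred at $x$. $\mathcal S=\{\sigma\in\mathcal X_\beta^{(n_\beta)}:|\mathrm{supp}[\sigma]\cap B_{L_\beta,L_\beta}(x)|\le\ell_c(\ell_c-1)+1\ \forall x\in\Lambda_\beta\}$. *)

From mathcomp Require Import all_boot.
From Stdlib Require Import Reals.

Set Implicit Arguments.
Unset Strict Implicit.
Unset Printing Implicit Defensive.

Definition Rceil (x : R) : Z := (1 - up (- x))%Z.

Definition lc (U Delta : R) : nat := Z.to_nat (Rceil (U / (2 * U - Delta))%R).

(* number of nearest-neighbour pairs inside a proto-critical droplet with
   parameter l = l_c : both shapes are orthogonally convex polyominoes of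
   area l(l-1)+1 whose bounding box has semi-perimeter 2l, hence perimeter 4l,
   so the number of internal bonds is (4 (l(l-1)+1) - 4l)/2 = 2 (l-1)^2. *)
Definition bpairs (l : nat) : nat := (2 * (l - 1) ^ 2)%N.

Definition Gamma (U Delta : R) : R :=
  (- U * INR (bpairs (lc U Delta))
   + Delta * INR (lc U Delta * (lc U Delta - 1) + 2))%R.

Definition tends_to (f : R -> R) (l : R) : Prop :=
  forall eps : R, (0 < eps)%R ->
    exists B : R, forall beta : R, (B < beta)%R -> (Rabs (f beta - l) < eps)%R.
Definition tends_to_infty (f : R -> R) : Prop :=
  forall M : R, exists B : R, forall beta : R, (B < beta)%R -> (M < f beta)%R.

(* the discrete torus Lambda of side N (odd), sites with coordinates mod N;
   the origin is the site (0,0) *)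
Definition site (N : nat) : finType := ('I_N * 'I_N)%type.

Definition tdist (N a b : nat) : nat :=
  minn ((a + N - b) %% N) ((b + N - a) %% N).

Definition nn (N : nat) (x y : site N) : bool :=
  (x != y) &&
  (((x.1 == y.1) && (tdist N x.2 y.2 == 1)) ||
   ((x.2 == y.2) && (tdist N x.1 y.1 == 1))).

(* number of unordered nearest-neighbour pairs {x,y} inside s
   (ordered pairs counted, divided by 2; nn is symmetric and irreflexive) *)
Definition npairs (N : nat) (s : {set site N}) : nat :=
  #|[set p : site N * site N | [&& p.1 \in s, p.2 \in s & nn p.1 p.2]]| %/ 2.

Definition Ham (U : R) (N : nat) (s : {set site N}) : R := (- U * INR (npairs s))%R.

Definition box (N L a b : nat) : {set site N} :=
  [set y : site N | (tdist N a y.1 <= (L - 1)./2) && (tdist N b y.2 <= (L - 1)./2)].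

Definition gibbs (beta U : R) (N n : nat) (A : {set {set site N}}) : R :=
  ((\big[Rplus/0%R]_(s in A | #|s| == n) exp (- beta * Ham U s))
   / (\big[Rplus/0%R]_(s : {set site N} | #|s| == n) exp (- beta * Ham U s)))%R.

Definition nbeta (Delta beta : R) (N : nat) : nat :=
  Z.to_nat (Rceil (exp (- beta * Delta) * INR (N * N))%R).

Definition Sset (U Delta : R) (N L n : nat) : {set {set site N}} :=
  [set s : {set site N} | (#|s| == n) &&
     [forall x : site N,
        #|s :&: box N L x.1 x.2| <= lc U Delta * (lc U Delta - 1) + 1]].

Definition Scheck0 (U Delta : R) (N L n : nat) : {set {set site N}} :=
  [set s in Sset U Delta N L n | s :&: box N L 0 0 == set0].

Arguments box : clear implicits.
Arguments Sset : clear implicits.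
Arguments Scheck0 : clear implicits.
Arguments gibbs beta U {N} n A.

(* Write a for the mass of the configurations of S that hit B_L(0) and A for
   the mass of S.  The torus, the Hamiltonian and the constraint defining S are
   invariant under translations, so every box B_L(c) is hit with the same mass
   a.  Summing over the N^2 centres c and exchanging the sums, each n-particle
   configuration is counted once per box it meets, i.e. at most n (2L)^2
   times; hence N^2 a <= 4 n L^2 A and the ratio mu(S_check(0)) / mu(S)
   = 1 - a / A is within 4 n L^2 / N^2 of 1.  This needs S to be non-empty,
   which a grid configuration of spacing L provides as soon as 4 n L^2 <= N^2.
   Finally n = ceil(rho N^2) <= 2 rho N^2 and rho L^2 = e^{-beta delta}, so
   4 n L^2 / N^2 <= 8 e^{-beta delta} -> 0. *)
From HB Require Import structures.
From mathcomp Require Import all_boot ssralg zmodp zify.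
From Stdlib Require Import Reals Lra.

Set Implicit Arguments.
Unset Strict Implicit.
Unset Printing Implicit Defensive.

Import GRing.Theory.

Lemma card_le_of_inj (T : finType) (f : T -> nat) r :
  injective f -> #|[set a | f a <= r]| <= r.+1.
Proof.
move=> f_inj; rewrite cardE -(size_map f) -(size_iota 0 r.+1).
apply: uniq_leq_size; first by rewrite (map_inj_uniq f_inj) enum_uniq.
by move=> k /mapP [a]; rewrite mem_enum inE => fa_le ->; rewrite mem_iota add0n ltnS.
Qed.

Lemma card_bigcup_le (T T' : finType) (A : {set T}) (F : T -> {set T'}) :
  #|\bigcup_(y in A) F y| <= \sum_(y in A) #|F y|.
Proof.
elim/big_rec2: _ => [|y B k _ IH]; first by rewrite cards0.
by apply: leq_trans (leq_card_setU _ _).1 _; rewrite leq_add2l.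
Qed.

(* The torus of side N = m.+1 is the group (Z/NZ)^2: its distance, its
   nearest-neighbour relation, its boxes, and hence the Hamiltonian and the
   set S, are invariant under the translations of this group. *)
Section TorusSymmetry.
Variable m : nat.
Local Notation N := m.+1.
Local Open Scope ring_scope.

Definition cnorm (x : 'I_N) : nat := let y : 'I_N := - x in minn x y.

Lemma tdist_sub (a b : 'I_N) : tdist N a b = cnorm (a - b).
Proof. by rewrite /tdist /cnorm opprB /= !modnDmr !addnBA // ltnW. Qed.

Lemma subr_translate (a b v : 'I_N) : (a - v) - (b - v) = a - b.
Proof. by rewrite opprD opprK addrACA addNr addr0. Qed.

Lemma site_subE (x v : site N) : (x - v).1 = x.1 - v.1 /\ (x - v).2 = x.2 - v.2.
Proof. by []. Qed.

Lemma nn_translate (v x y : site N) : nn (x - v) (y - v) = nn x y.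
Proof.
rewrite /nn (inj_eq (addIr (- v))) !tdist_sub.
have [-> ->] := site_subE x v; have [-> ->] := site_subE y v.
by rewrite !subr_translate !(inj_eq (addIr _)).
Qed.

Lemma box_translate L (v c y : site N) :
  (y - v \in box N L (c - v).1 (c - v).2) = (y \in box N L c.1 c.2).
Proof.
rewrite !inE !tdist_sub.
have [-> ->] := site_subE y v; have [-> ->] := site_subE c v.
by rewrite !subr_translate.
Qed.

Definition translate (v : site N) (s : {set site N}) : {set site N} :=
  [set y : site N | y - v \in s].

Lemma mem_translate v s y : (y \in translate v s) = (y - v \in s).
Proof. by rewrite inE. Qed.

Lemma card_translate v s : #|translate v s| = #|s|.
Proof. by rewrite card_preimset //; exact: addIr. Qed.

Lemma translate_inj v : injective (translate v).
Proof. by move=> s t eq_st; apply/setP => y; rewrite -[y](addrK v) -!mem_translate eq_st. Qed.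

Lemma npairs_translate v s : npairs (translate v s) = npairs s.
Proof.
pose w (p : site N * site N) : site N * site N := (p.1 - v, p.2 - v).
have w_inj : injective w.
  move=> [a b] [c d] eq_w; have eq1 : a - v = c - v := congr1 fst eq_w.
  have eq2 : b - v = d - v := congr1 snd eq_w.
  by rewrite (addIr _ eq1) (addIr _ eq2).
rewrite /npairs; congr (_ %/ 2).
rewrite -[X in _ = X](card_preimset _ w_inj); apply: eq_card => p.
by rewrite !inE /= nn_translate.
Qed.

Lemma Ham_translate U v s : Ham U (translate v s) = Ham U s.
Proof. by rewrite /Ham npairs_translate. Qed.

Lemma translate_boxI L v (c : site N) s :
  translate v s :&: box N L c.1 c.2 = translate v (s :&: box N L (c - v).1 (c - v).2).
Proof. by apply/setP => y; rewrite !(in_setI, mem_translate) box_translate. Qed.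

Lemma Sset_translate U Delta L n v s :
  (translate v s \in Sset U Delta N L n) = (s \in Sset U Delta N L n).
Proof.
have cardI x : #|translate v s :&: box N L (x + v).1 (x + v).2| = #|s :&: box N L x.1 x.2|.
  by rewrite translate_boxI card_translate addrK.
rewrite !inE card_translate; congr (_ && _).
apply/forallP/forallP => sparse x; first by rewrite -cardI.
by rewrite -(subrK v x) cardI.
Qed.

Lemma translate_avoids L c s :
  (translate c s :&: box N L c.1 c.2 == set0) = (s :&: box N L 0 0 == set0).
Proof. by rewrite translate_boxI subrr -!cards_eq0 card_translate. Qed.

Lemma card_ball (c : 'I_N) r : #|[set a : 'I_N | tdist N a c <= r]| <= r.+1.*2.
Proof.
pose d1 (a : 'I_N) : nat := a - c; pose d2 (a : 'I_N) : nat := c - a.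
have d1_inj : injective d1 by move=> a b /val_inj/addIr.
have d2_inj : injective d2 by move=> a b /val_inj/addrI/oppr_inj.
apply: (@leq_trans #|[set a | d1 a <= r] :|: [set a | d2 a <= r]|).
  by apply/subset_leq_card/subsetP => a; rewrite !inE tdist_sub /cnorm opprB geq_min.
rewrite -addnn; apply: leq_trans (leq_card_setU _ _).1 _.
by apply: leq_add; exact: card_le_of_inj.
Qed.

End TorusSymmetry.

Section BoxCounting.
Variables (m L : nat).
Local Notation N := m.+1.
Hypothesis L_gt0 : 0 < L.

Lemma box_radius_le : ((L - 1)./2).+1.*2 <= L.*2.
Proof. by have := odd_double_half (L - 1); lia. Qed.

Lemma card_boxes_containing (y : site N) :
  #|[set x : site N | y \in box N L x.1 x.2]| <= L.*2 * L.*2.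
Proof.
set r := (L - 1)./2.
have -> : [set x : site N | y \in box N L x.1 x.2] =
    setX [set a : 'I_N | tdist N a y.1 <= r] [set a : 'I_N | tdist N a y.2 <= r].
  by apply/setP => x; rewrite !inE.
have ball_le (a : 'I_N) := leq_trans (card_ball a r) box_radius_le.
by rewrite cardsX; exact: leq_mul.
Qed.

Lemma card_boxes_hit (s : {set site N}) :
  #|[set x : site N | s :&: box N L x.1 x.2 != set0]| <= #|s| * (L.*2 * L.*2).
Proof.
apply: (@leq_trans #|\bigcup_(y in s) [set x : site N | y \in box N L x.1 x.2]|).
  apply/subset_leq_card/subsetP => x; rewrite in_set => /set0Pn [y].
  move/setIP => [ys yb].
  by apply/bigcupP; exists y => //; rewrite in_set.
apply: leq_trans (card_bigcup_le _ _) _.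
rewrite -sum1_card big_distrl /=; apply: leq_sum => y _.
by rewrite mul1n card_boxes_containing.
Qed.

End BoxCounting.

(* Real addition is a commutative monoid law, so that the bigop theory
   (exchange of sums, reindexing, splitting) applies to the sums in gibbs. *)
Lemma Rplus_associative : associative Rplus.
Proof. by move=> x y z; rewrite Rplus_assoc. Qed.

HB.instance Definition _ :=
  Monoid.isComLaw.Build R 0%R Rplus Rplus_associative Rplus_comm Rplus_0_l.

Section RealSums.
Variables (I : finType) (P : pred I).

Lemma bigR_le (F G : I -> R) :
  (forall i, P i -> (F i <= G i)%R) ->
  (\big[Rplus/0%R]_(i | P i) F i <= \big[Rplus/0%R]_(i | P i) G i)%R.
Proof.
move=> le_FG; elim/big_rec2: _ => [|i x y Pi le_xy]; first exact: Rle_refl.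
exact: Rplus_le_compat (le_FG i Pi) le_xy.
Qed.

Lemma bigR_ge0 (F : I -> R) :
  (forall i, P i -> (0 <= F i)%R) -> (0 <= \big[Rplus/0%R]_(i | P i) F i)%R.
Proof.
move=> F_ge0; elim/big_rec: _ => [|i x Pi x_ge0]; first exact: Rle_refl.
by have := F_ge0 i Pi; lra.
Qed.

Lemma bigR_mulr (F : I -> R) c :
  \big[Rplus/0%R]_(i | P i) (F i * c)%R = (\big[Rplus/0%R]_(i | P i) F i * c)%R.
Proof.
elim/big_rec2: _ => [|i x y Pi ->]; first by rewrite Rmult_0_l.
by rewrite Rmult_plus_distr_r.
Qed.

Lemma bigR_const c : \big[Rplus/0%R]_(i | P i) c = (INR #|[set i | P i]| * c)%R.
Proof.
rewrite (eq_bigl (fun i => i \in [set i | P i])) => [|i]; last by rewrite inE.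
rewrite big_const; elim: #|_| => [|k IH]; first by rewrite /= Rmult_0_l.
by rewrite iterS IH S_INR; ring.
Qed.

End RealSums.

Definition weight (beta U : R) N (s : {set site N}) : R := exp (- beta * Ham U s).

Definition mass (beta U : R) N (n : nat) (A : {set {set site N}}) : R :=
  \big[Rplus/0%R]_(s in A | #|s| == n) weight beta U s.

Lemma weight_gt0 beta U N (s : {set site N}) : (0 < weight beta U s)%R.
Proof. exact: exp_pos. Qed.

Section Mass.
Variables (beta U : R) (N n : nat).
Local Notation mass := (mass beta U n).

Lemma mass_ge0 (A : {set {set site N}}) : (0 <= mass A)%R.
Proof. by apply: bigR_ge0 => s _; apply/Rlt_le/weight_gt0. Qed.

Lemma mass_gt0 (A : {set {set site N}}) s0 : s0 \in A -> #|s0| = n -> (0 < mass A)%R.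
Proof.
move=> s0A s0n; rewrite /mass (bigD1 s0) /=; last by rewrite s0A s0n eqxx.
apply: Rplus_lt_le_0_compat; first exact: weight_gt0.
by apply: bigR_ge0 => s _; apply/Rlt_le/weight_gt0.
Qed.

Lemma mass_split (A B : {set {set site N}}) :
  mass A = (mass (A :&: B) + mass (A :\: B))%R.
Proof.
rewrite /mass (bigID (mem B)) /=; congr (_ + _)%R; apply: eq_bigl => s;
  by rewrite !inE; case: (s \in A) (s \in B) (#|s| == n) => [] [] [].
Qed.

Lemma gibbs_ratio (A B : {set {set site N}}) s0 :
  s0 \in B -> #|s0| = n ->
  (gibbs beta U n A / gibbs beta U n B = mass A / mass B)%R.
Proof.
move=> s0B s0n; have mB_gt0 := mass_gt0 s0B s0n.
have mT_gt0 : (0 < mass setT)%R := mass_gt0 (in_setT s0) s0n.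
have gibbsE (X : {set {set site N}}) :
    gibbs beta U n X = (mass X / mass [set: {set site N}])%R.
  by congr (_ / _)%R; apply: eq_bigl => s; rewrite inE.
by rewrite !gibbsE; field; split; apply: Rgt_not_eq.
Qed.

End Mass.

Definition hits N L (a b : nat) : {set {set site N}} :=
  [set s | s :&: box N L a b != set0].

Lemma Scheck0E U Delta N L n :
  Scheck0 U Delta N L n = Sset U Delta N L n :\: hits N L 0 0.
Proof. by apply/setP => s; rewrite !inE negbK andbC. Qed.

Section DoubleCounting.
Variables (m : nat) (beta U Delta : R) (L n : nat).
Local Notation N := m.+1.
Local Notation S := (Sset U Delta N L n).

Lemma mass_hits_translate (c : site N) :
  mass beta U n (S :&: hits N L c.1 c.2) = mass beta U n (S :&: hits N L 0 0).
Proof.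
rewrite /mass (reindex_inj (@translate_inj m c)); apply: eq_big => s.
  by rewrite !in_setI Sset_translate card_translate !in_set translate_avoids.
by move=> _; rewrite /weight Ham_translate.
Qed.

Hypothesis L_gt0 : 0 < L.

(* Exchanging the sums over centres and configurations: an n-particle
   configuration meets at most n (2L)^2 boxes. *)
Lemma sum_mass_hits (A : {set {set site N}}) :
  (\big[Rplus/0%R]_(c : site N) mass beta U n (A :&: hits N L c.1 c.2)
     <= INR (n * (L.*2 * L.*2)) * mass beta U n A)%R.
Proof.
have mass_hitsE (c : site N) : mass beta U n (A :&: hits N L c.1 c.2) =
    \big[Rplus/0%R]_(s in A | #|s| == n)
       (if s \in hits N L c.1 c.2 then weight beta U s else 0%R).
  rewrite -big_mkcondr; apply: eq_bigl => s.
  by rewrite in_setI -!andbA; congr (_ && _); rewrite andbC.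
rewrite (eq_bigr _ (fun c _ => mass_hitsE c)) exchange_big /=.
rewrite /mass Rmult_comm -bigR_mulr; apply: bigR_le => s /andP [_ /eqP s_n].
rewrite -big_mkcond bigR_const Rmult_comm; apply: Rmult_le_compat_l.
  exact/Rlt_le/weight_gt0.
apply/le_INR/leP; rewrite -s_n; apply: leq_trans (card_boxes_hit L_gt0 s).
by apply/subset_leq_card/subsetP => c; rewrite !inE.
Qed.

End DoubleCounting.

Lemma tdist_le_cases N a b r : a < N -> b < N -> tdist N a b <= r ->
  (a <= b + r /\ b <= a + r) \/ a + N <= b + r \/ b + N <= a + r.
Proof.
move=> a_lt b_lt; have modE x y : x < N -> y < N ->
    (x + N - y) %% N = if y <= x then x - y else x + N - y.
  move=> x_lt y_lt; case: leqP => [le_yx|lt_xy]; last by rewrite modn_small; lia.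
  by rewrite addnC -addnBA // addnC modnDr modn_small //; lia.
rewrite /tdist geq_min !modE //.
by case: (leqP b a) => ?; case: (leqP a b) => ? /orP[]; lia.
Qed.

Lemma grid_separated N L q i j c : 0 < L -> q * L <= N -> i < q -> j < q -> c < N ->
  tdist N c (i * L) <= (L - 1)./2 -> tdist N c (j * L) <= (L - 1)./2 -> i = j.
Proof.
move=> L_gt0 qL_le i_lt j_lt c_lt.
have r2_lt : (L - 1)./2 + (L - 1)./2 < L by have := odd_double_half (L - 1); lia.
wlog lt_ij : i j i_lt j_lt / i < j.
  move=> wlog ci cj; case: (ltngtP i j) => [lt_ij|lt_ji|//].
    exact: wlog ci cj.
  by apply/esym; apply: wlog cj ci.
have gap : i * L + L <= j * L by rewrite -mulSnr leq_mul2r lt_ij orbT.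
have top : j * L + L <= N.
  by apply: leq_trans qL_le; rewrite -mulSnr leq_mul2r j_lt orbT.
have iL_lt : i * L < N by lia.
have jL_lt : j * L < N by lia.
move=> /(tdist_le_cases c_lt iL_lt) ci /(tdist_le_cases c_lt jL_lt) cj.
lia.
Qed.

Lemma grid_capacity N L n : 0 < L -> 4 * n * (L * L) <= N * N -> n <= (N %/ L) * (N %/ L).
Proof.
move=> L_gt0 le_nN; have := ltn_ceil N L_gt0; set q := N %/ L => N_lt.
have NN_lt : N * N < (q.+1 * L) * (q.+1 * L) by apply: ltn_mul.
have : 4 * n < q.+1 * q.+1.
  have LL_gt0 : 0 < L * L by rewrite muln_gt0 L_gt0.
  by rewrite -(ltn_pmul2r LL_gt0); apply: leq_ltn_trans le_nN _; lia.
nia.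
Qed.

Lemma sparse_configuration N L n : 0 < L -> 4 * n * (L * L) <= N * N ->
  exists s : {set site N},
    #|s| = n /\ forall x : site N, #|s :&: box N L x.1 x.2| <= 1.
Proof.
move=> L_gt0 le_nN; have := grid_capacity L_gt0 le_nN.
set q := N %/ L => n_le; have qL_le : q * L <= N by apply: leq_divM.
have iL_lt (i : 'I_q) : i * L < N by apply: leq_trans qL_le; rewrite ltn_pmul2r.
pose g (p : 'I_q * 'I_q) : site N := (Ordinal (iL_lt p.1), Ordinal (iL_lt p.2)).
have g_inj : injective g.
  move=> [i1 i2] [j1 j2] [/eqP e1 /eqP e2].
  by rewrite !eqn_pmul2r // in e1 e2; rewrite (val_inj (eqP e1)) (val_inj (eqP e2)).
have : n <= #|g @: setT| by rewrite card_imset // cardsT card_prod card_ord.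
case/card_geqP => t [t_uniq t_size t_sub]; exists [set x in t]; split.
  by rewrite cardsE (card_uniqP t_uniq).
move=> x; apply/card_le1_eqP => y z; rewrite !inE.
move=> /andP [/t_sub/imsetP [[i1 i2] _ ->] /andP [y1 y2]].
move=> /andP [/t_sub/imsetP [[j1 j2] _ ->] /andP [z1 z2]].
have e1 := grid_separated L_gt0 qL_le (ltn_ord i1) (ltn_ord j1) (ltn_ord x.1) y1 z1.
have e2 := grid_separated L_gt0 qL_le (ltn_ord i2) (ltn_ord j2) (ltn_ord x.2) y2 z2.
by rewrite (val_inj e1) (val_inj e2).
Qed.

Lemma retained_fraction a b K NN : (0 <= a)%R -> (0 < a + b)%R -> (0 < NN)%R ->
  (NN * a <= K * (a + b))%R -> (Rabs (b / (a + b) - 1) <= K / NN)%R.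
Proof.
move=> a_ge0 ab_gt0 NN_gt0 le_aK.
have -> : (b / (a + b) - 1 = - (a / (a + b)))%R by field; lra.
rewrite Rabs_Ropp Rabs_right; last by apply/Rle_ge/Rmult_le_pos/Rlt_le/Rinv_0_lt_compat.
apply: (Rmult_le_reg_r ((a + b) * NN)); first exact: Rmult_lt_0_compat.
have -> : (a / (a + b) * ((a + b) * NN) = NN * a)%R by field; lra.
by have -> : (K / NN * ((a + b) * NN) = K * (a + b))%R by field; lra.
Qed.

Lemma Scheck0_ratio_bound beta U Delta N L n :
  0 < N -> 0 < L -> 4 * n * (L * L) <= N * N ->
  (Rabs (gibbs beta U n (Scheck0 U Delta N L n) / gibbs beta U n (Sset U Delta N L n) - 1)
     <= INR (4 * n * (L * L)) / INR (N * N))%R.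
Proof.
case: N => [//|m] _ L_gt0 le_nN.
have [s0 [s0n s0_sparse]] := sparse_configuration L_gt0 le_nN.
set S := Sset U Delta m.+1 L n; set H := hits m.+1 L 0 0.
have s0S : s0 \in S.
  rewrite inE s0n eqxx /=; apply/forallP => x.
  exact: leq_trans (s0_sparse x) (leq_addl _ _).
rewrite (gibbs_ratio beta U _ s0S s0n) Scheck0E (mass_split _ _ _ S H).
apply: retained_fraction; first exact: mass_ge0.
- by rewrite -mass_split; exact: mass_gt0 s0S s0n.
- by apply/lt_0_INR/ltP; rewrite muln_gt0.
have := sum_mass_hits beta U n L_gt0 S.
rewrite -mass_split (eq_bigr _ (fun c _ => mass_hits_translate beta U Delta L n c)).
by rewrite bigR_const cardsT card_prod card_ord (_ : n * _ = 4 * n * (L * L)) //; lia.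
Qed.

Lemma ceil_le_double x : (1 <= x)%R -> (INR (Z.to_nat (Rceil x)) <= 2 * x)%R.
Proof.
move=> x_ge1; have [up_gt _] := archimed (- x).
have ceil_lt : (IZR (Rceil x) < x + 1)%R by rewrite /Rceil minus_IZR; lra.
case ceilE: (Rceil x) ceil_lt => [|p|p] /= ceil_lt; try lra.
by rewrite INR_IPR -[IPR p]/(IZR (Z.pos p)); lra.
Qed.

Lemma crowding_bound beta Delta delta N L :
  (1 <= INR (N * N) * exp (- beta * Delta))%R ->
  (INR L ^ 2 = exp ((Delta - delta) * beta))%R ->
  (INR (4 * nbeta Delta beta N * (L * L)) <= 8 * exp (- (beta * delta)) * INR (N * N))%R.
Proof.
move=> dense L2; set rho := exp (- beta * Delta).
have n_le : (INR (nbeta Delta beta N) <= 2 * (rho * INR (N * N)))%R.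
  by apply: ceil_le_double; rewrite Rmult_comm.
have rhoL2 : (rho * INR L ^ 2 = exp (- (beta * delta)))%R.
  by rewrite L2 -exp_plus; congr exp; ring.
have L2_ge0 : (0 <= INR L ^ 2)%R by apply: pow2_ge_0.
have := Rmult_le_compat_r _ _ _ L2_ge0 n_le.
rewrite -rhoL2 !mult_INR; have -> : INR 4 = 4%R by rewrite /=; ring.
nra.
Qed.

Lemma Scheck0_ratio_small beta U Delta delta N L e :
  0 < N -> 0 < L ->
  (1 <= INR (N * N) * exp (- beta * Delta))%R ->
  (INR L ^ 2 = exp ((Delta - delta) * beta))%R ->
  (8 * exp (- (beta * delta)) < e)%R -> (e <= 1)%R ->
  (Rabs (gibbs beta U (nbeta Delta beta N) (Scheck0 U Delta N L (nbeta Delta beta N))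
         / gibbs beta U (nbeta Delta beta N) (Sset U Delta N L (nbeta Delta beta N)) - 1)
     < e)%R.
Proof.
move=> N_gt0 L_gt0 dense L2 small e_le1; set n := nbeta Delta beta N.
have NN_gt0 : (0 < INR (N * N))%R by apply/lt_0_INR/ltP; rewrite muln_gt0 N_gt0.
have small_NN := Rmult_lt_compat_r _ _ _ NN_gt0 small.
have crowd_lt : (INR (4 * n * (L * L)) < e * INR (N * N))%R.
  by apply: (Rle_lt_trans _ _ _ (crowding_bound dense L2)); lra.
have le_nN : 4 * n * (L * L) <= N * N.
  apply/leP/INR_le; have := Rmult_le_compat_r _ _ _ (Rlt_le _ _ NN_gt0) e_le1; lra.
apply: (Rle_lt_trans _ _ _ (Scheck0_ratio_bound _ _ _ N_gt0 L_gt0 le_nN)).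
apply: (Rmult_lt_reg_r (INR (N * N))) => //.
by rewrite /Rdiv Rmult_assoc Rinv_l; lra.
Qed.

Lemma exp_opp_eventually_small (f : R -> R) e :
  tends_to_infty f -> (0 < e)%R ->
  exists B, forall beta, (B < beta)%R -> (exp (- f beta) < e)%R.
Proof.
move=> f_infty e_gt0; have [B f_big] := f_infty (- ln e)%R.
exists B => beta /f_big f_gt; rewrite -(exp_ln e e_gt0).
by apply: exp_increasing; lra.
Qed.

Theorem lemmaB2 (U Delta : R) (N L : R -> nat) (delta : R -> R) :
  (0 < U)%R -> (U < Delta)%R -> (Delta < 2 * U)%R ->
  (forall k : nat, (U / (2 * U - Delta))%R <> INR k) ->
  (forall beta : R, (0 < beta)%R -> odd (N beta)) ->
  (forall beta : R, (0 < beta)%R -> odd (L beta)) ->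
  (forall beta : R, (0 < beta)%R ->
     (INR (L beta) ^ 2)%R = exp ((Delta - delta beta) * beta)%R) ->
  tends_to delta 0%R ->
  tends_to_infty (fun beta => (beta * delta beta)%R) ->
  tends_to_infty (fun beta => (INR (N beta * N beta) * exp (- beta * Delta))%R) ->
  tends_to (fun beta => (INR (N beta * N beta) * exp (- beta * Gamma U Delta))%R) 0%R ->
  tends_to
    (fun beta =>
       (gibbs beta U (nbeta Delta beta (N beta)) (Scheck0 U Delta (N beta) (L beta) (nbeta Delta beta (N beta)))
        / gibbs beta U (nbeta Delta beta (N beta)) (Sset U Delta (N beta) (L beta) (nbeta Delta beta (N beta))))%R)
    1%R.
Proof.
move=> _ _ _ _ N_odd L_odd L2 _ beta_delta dense _ eps eps_gt0.
set e := Rmin eps 1; have e_gt0 : (0 < e)%R by apply: Rmin_glb_lt; lra.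
have [B1 sparse] := @exp_opp_eventually_small _ (e / 8)%R beta_delta ltac:(lra).
have [B2 crowded] := dense 1%R.
exists (Rmax 0 (Rmax B1 B2)) => beta beta_gt.
have [beta_gt0 beta_gt1 beta_gt2] : [/\ 0 < beta, B1 < beta & B2 < beta]%R.
  by move: beta_gt; rewrite !Rmax_Rlt => -[? [? ?]]; split.
apply: (Rlt_le_trans _ e); last exact: Rmin_l.
apply: Scheck0_ratio_small (L2 beta beta_gt0) _ (Rmin_r _ _).
- by rewrite odd_gt0 ?N_odd.
- by rewrite odd_gt0 ?L_odd.
- exact/Rlt_le/crowded.
- have small : (exp (- (beta * delta beta)) < e / 8)%R := sparse beta beta_gt1.
  by rewrite -/e; lra.
Qed.
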